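(* Let $\varphi$ be a formula and $T$ a set of formulae of $\mathcal L$. There exist a set $Q$ of new predicate symbols (not in $\mathcal L$) and an order clausal theory $S^\varphi_T$ over $\mathcal L\cup Q$ such that: (i) for every interpretation $\mathfrak A$ for $\mathcal L$: ($\mathfrak A\models T$ and $\mathfrak A\not\models\varphi$) if and only if there exists an expansion $\mathfrak A'$ of $\mathfrak A$ to $\mathcal L\cup Q$ with $\mathfrak A'\models S^\varphi_T$; (ii) $T\models\varphi$ if and only if $S^\varphi_T$ is unsatisfiable; (iii) if $T$ is finite, then $Q$ is finite with $|Q|\le c\cdot(|T|+|\varphi|)$, $S^\varphi_T$ is finite and $|S^\varphi_T|\le c\cdot(|T|^2+|\varphi|^2)$, for an absolute constant $c$ (independent of $\mathcal L$, $T$, $\varphi$); (iv) $\mathrm{tcons}(S^\varphi_T)\setminus\{\bar0,\bar1\}\subseteq(\mathrm{tcons}(\varphi)\cup\mathrm{tcons}(T))\setminus\{\bar0,\bar1\}$.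
   Context: First-order Gödel logic with truth constants. Fix a countable first-order language $\mathcal L$ and a countable set $C_{\mathcal L}$ with $\{0,1\}\subseteq C_{\mathcal L}\subseteq[0,1]$; for each $c\in C_{\mathcal L}$ there is a truth constant $\bar c$. Formulae are built from atoms and truth constants using $\neg$, $\Delta$, $\wedge,\vee,\rightarrow,\leftrightarrow$, $\eqcirc$ (equality), $\prec$ (strict order), $\forall,\exists$. An interpretation has a nonempty universe, ordinary functions and $[0,1]$-valued relations. Truth values under an assignment $e$: atoms by the relations; $\|\bar c\|=c$; $\|\neg\varphi\|=1$ if $\|\varphi\|=0$ else $0$; $\|\Delta\varphi\|=1$ if $\|\varphi\|=1$ else $0$; $\wedge=\min$, $\vee=\max$; $\|\varphi\to\psi\|=1$ if $\|\varphi\|\le\|\psi\|$ else $\|\psi\|$; $\|\varphi\leftrightarrow\psi\|=\min(\|\varphi\to\psi\|,\|\psi\to\varphi\|)$; $\|\varphi\eqcirc\psi\|=1$ if equal else $0$; $\|\varphi\prec\psi\|=1$ if $\|\varphi\|<\|\psi\|$ else $0$; $\forall=\inf$, $\exists=\sup$. $\mathcal I\models\varphi$ iff $\|\varphi\|^{\mathcal I}_e=1$ for all assignments $e$; $\mathcal I\models T$ iff $\mathcal I\models\psi$ for all $\psi\in T$; $T\models\varphi$ iff every interpretation for $\mathcal L$ that is a model of $T$ is a model of $\varphi$. For languages $\mathcal L_1\subseteq\mathcal L_2$, an interpretation for $\mathcal L_2$ is an expansion of one for $\mathcal L_1$ if they have the same universe and agree on the symbols of $\mathcal L_1$. Size: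 $|x|=1$ for a variable, $|f(t_1,\dots,t_n)|=|p(t_1,\dots,t_n)|=1+\sum|t_i|$; $|\bar c|=1$; $|\neg\varphi|=|\Delta\varphi|=1+|\varphi|$; $|\varphi\diamond\psi|=1+|\varphi|+|\psi|$; $|Qx\,\varphi|=2+|\varphi|$; $|T|=\sum_{\psi\in T}|\psi|$ for finite $T$. $\mathrm{tcons}(\cdot)$ is the set of truth constants occurring. Order clauses: a quantified atom is $Qx\,p(t_0,\dots,t_n)$ with $Q\in\{\forall,\exists\}$, $x$ occurring in $p(t_0,\dots,t_n)$, and for each $i$ either $t_i=x$ or $x$ does not occur in $t_i$. An order literal is $\varepsilon_1\diamond\varepsilon_2$, each $\varepsilon_i$ an atom, truth constant or quantified atom, $\diamond\in\{\eqcirc,\prec\}$. An order clause is a finite set of order literals ($\square$ = empty clause); $\mathcal I\models_e C$ iff some literal of $C$ has value $1$ under $e$; $\mathcal I\models C$ iff for all $e$; $\mathcal I\models S$ iff $\mathcal I\models C$ for all $C\in S$; $S$ is satisfiable iff it has a model. $|C|=\sum_{l\in C}|l|$, $|S|=\sum_{C\in S}|C|$. *)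

From mathcomp Require Import all_boot all_order all_algebra.
From mathcomp Require Import boolp classical_sets reals.
From mathcomp Require Export Rstruct.
From Stdlib Require List.
Set Implicit Arguments. Unset Strict Implicit. Unset Printing Implicit Defensive.
Import Order.TTheory GRing.Theory Num.Theory.
Local Open Scope ring_scope.

(** Symbols (function or predicate) are pairs (name, arity). *)
Definition sym := (nat * nat)%type.
Definition arity (s : sym) : nat := s.2.

Inductive term := Var of nat | Fn of sym & seq term.

Inductive formula (R : Type) :=
| Atom of sym & seq term
| Cst of R
| Neg of formula R
| Dlt of formula R
| Conj of formula R & formula R
| Disj of formula R & formula R
| Imp of formula R & formula R
| Iff of formula R & formula R
| Eqc of formula R & formula R
| Prec of formula R & formula R
| All of nat & formula R
| Ex of nat & formula R.
Arguments Cst {R}.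
Arguments Atom {R}.

Record language := Lang { Lfun : sym -> Prop; Lpred : sym -> Prop }.

Fixpoint wf_term (Lf : sym -> Prop) (t : term) : Prop :=
  match t with
  | Var _ => True
  | Fn f ts => Lf f /\ size ts = arity f /\
      (fix go (ts : seq term) : Prop :=
         match ts with [::] => True | t :: ts => wf_term Lf t /\ go ts end) ts
  end.

Fixpoint wf_form R (Lf Lp : sym -> Prop) (CL : R -> Prop) (f : formula R) : Prop :=
  match f with
  | Atom p ts => Lp p /\ size ts = arity p /\ List.Forall (wf_term Lf) ts
  | Cst c => CL c
  | Neg a | Dlt a | All _ a | Ex _ a => wf_form Lf Lp CL a
  | Conj a b | Disj a b | Imp a b | Iff a b | Eqc a b | Prec a b =>
      wf_form Lf Lp CL a /\ wf_form Lf Lp CL b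
  end.

Fixpoint tsize (t : term) : nat :=
  match t with
  | Var _ => 1
  | Fn _ ts => 1 + (fix go (ts : seq term) : nat :=
                      match ts with [::] => 0 | t :: ts => tsize t + go ts end) ts
  end%N.

Fixpoint fsize R (f : formula R) : nat :=
  match f with
  | Atom _ ts => 1 + sumn (map tsize ts)
  | Cst _ => 1
  | Neg a | Dlt a => 1 + fsize a
  | Conj a b | Disj a b | Imp a b | Iff a b | Eqc a b | Prec a b =>
      1 + fsize a + fsize b
  | All _ a | Ex _ a => 2 + fsize a
  end%N.

Fixpoint tcons R (f : formula R) : seq R :=
  match f with
  | Atom _ _ => [::]
  | Cst c => [:: c]
  | Neg a | Dlt a | All _ a | Ex _ a => tcons a
  | Conj a b | Disj a b | Imp a b | Iff a b | Eqc a b | Prec a b =>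
      tcons a ++ tcons b
  end.

(** interpretations over a universe D (nonemptiness of D is required separately) *)
Record interp (R : realType) (D : Type) := Interp {
  ifun : sym -> seq D -> D;
  ipred : sym -> seq D -> R;
  ipred01 : forall p ds, 0 <= ipred p ds <= 1 }.

Fixpoint teval D (F : sym -> seq D -> D) (e : nat -> D) (t : term) : D :=
  match t with
  | Var x => e x
  | Fn f ts => F f ((fix go (ts : seq term) : seq D :=
                       match ts with [::] => [::] | t :: ts => teval F e t :: go ts end) ts)
  end.

Definition upd D (e : nat -> D) (x : nat) (d : D) : nat -> D :=
  fun y => if y == x then d else e y.

Definition impv (R : realType) (a b : R) : R := if a <= b then 1 else b.

Fixpoint fval (R : realType) D (I : interp R D) (e : nat -> D) (f : formula R) : R :=
  match f with
  | Atom p ts => ipred I p (map (teval (ifun I) e) ts)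
  | Cst c => c
  | Neg a => if fval I e a == 0 then 1 else 0
  | Dlt a => if fval I e a == 1 then 1 else 0
  | Conj a b => Num.min (fval I e a) (fval I e b)
  | Disj a b => Num.max (fval I e a) (fval I e b)
  | Imp a b => impv (fval I e a) (fval I e b)
  | Iff a b => Num.min (impv (fval I e a) (fval I e b)) (impv (fval I e b) (fval I e a))
  | Eqc a b => if fval I e a == fval I e b then 1 else 0
  | Prec a b => if fval I e a < fval I e b then 1 else 0
  | All x a => inf (range (fun d : D => fval I (upd e x d) a))
  | Ex x a => sup (range (fun d : D => fval I (upd e x d) a))
  end.

Definition fmodels (R : realType) D (I : interp R D) (f : formula R) : Prop :=
  forall e, fval I e f = 1.
Definition tmodels (R : realType) D (I : interp R D) (T : formula R -> Prop) : Prop :=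
  forall psi, T psi -> fmodels I psi.
Definition entails (R : realType) (T : formula R -> Prop) (phi : formula R) : Prop :=
  forall (D : Type), inhabited D -> forall I : interp R D, tmodels I T -> fmodels I phi.

Definition expands (R : realType) (L : language) D (I I' : interp R D) : Prop :=
  (forall f, Lfun L f -> ifun I' f = ifun I f) /\
  (forall p, Lpred L p -> ipred I' p = ipred I p).

Fixpoint occ (x : nat) (t : term) : bool :=
  match t with
  | Var y => y == x
  | Fn _ ts => (fix go (ts : seq term) : bool :=
                  match ts with [::] => false | t :: ts => occ x t || go ts end) ts
  end.
Definition is_var (x : nat) (t : term) : bool :=
  if t is Var y then y == x else false.

Definition qatom_cond (x : nat) (ts : seq term) : Prop :=
  has (occ x) ts /\ all (fun t => is_var x t || ~~ occ x t) ts.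

Definition quantified_atom R (f : formula R) : Prop :=
  match f with
  | All x (Atom _ ts) => qatom_cond x ts
  | Ex x (Atom _ ts) => qatom_cond x ts
  | _ => False
  end.

Definition order_expr R (f : formula R) : Prop :=
  match f with
  | Atom _ _ => True
  | Cst _ => True
  | _ => quantified_atom f
  end.

Definition order_literal R (f : formula R) : Prop :=
  match f with
  | Eqc a b | Prec a b => order_expr a /\ order_expr b
  | _ => False
  end.

(** an order clause: a finite set of order literals, represented by a list *)
Definition clause R := seq (formula R).
Definition is_order_clause R (C : clause R) : Prop :=
  forall l, List.In l C -> order_literal l.
Definition csize R (C : clause R) : nat := sumn (map (@fsize R) C).

Definition csat (R : realType) D (I : interp R D) (e : nat -> D) (C : clause R) : Prop :=
  exists l, List.In l C /\ fval I e l = 1.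
Definition cmodels (R : realType) D (I : interp R D) (C : clause R) : Prop :=
  forall e, csat I e C.
Definition smodels (R : realType) D (I : interp R D) (S : clause R -> Prop) : Prop :=
  forall C, S C -> cmodels I C.
Definition satisfiable (R : realType) (S : clause R -> Prop) : Prop :=
  exists (D : Type), inhabited D /\ exists I : interp R D, smodels I S.

Definition fin_card X (A : X -> Prop) (n : nat) : Prop :=
  exists s : seq X, List.NoDup s /\ (forall x, A x <-> List.In x s) /\ size s = n.
Definition fin_weight X (A : X -> Prop) (w : X -> nat) (n : nat) : Prop :=
  exists s : seq X, List.NoDup s /\ (forall x, A x <-> List.In x s) /\ sumn (map w s) = n.

Definition countable_set X (A : X -> Prop) : Prop :=
  exists f : X -> nat, forall x y, A x -> A y -> f x = f y -> x = y.

(* A structure-preserving (Tseitin-style) translation.  Let [v] list the variables of a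
   formula [psi].  Every subformula [chi] of [psi] gets a fresh predicate symbol [P_chi], and
   a constant number of order clauses, each of size O(|v|), tie the atom [P_chi(v)] to the
   connective of [chi] applied to the atoms of its immediate subformulae; a quantifier over
   such an atom is a quantified atom, so quantifiers need no further work.  A formula [psi]
   of [T] contributes [P_psi(v) = 1], and [phi] contributes [P(v) < 1] for the symbol of its
   universal closure.  A countermodel of [T |= phi] expands to a model of the clauses by
   interpreting each [P_chi] as [chi]; conversely, induction on subformulae shows that the
   clauses force every [P_chi(v)] to take the value of [chi].  As [psi] has at most |psi|
   subformulae, its clauses have total size O(|psi|^2). *)

From Pilot Require Import Defs.
From mathcomp Require Import all_boot all_order all_algebra.
From mathcomp Require Import boolp classical_sets reals Rstruct.
From mathcomp Require Import zify.
From Stdlib Require List.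
From Stdlib Require Import Classical.
Import Order.TTheory GRing.Theory Num.Theory.
Local Open Scope ring_scope.
Set Implicit Arguments. Unset Strict Implicit. Unset Printing Implicit Defensive.

Lemma all_In T (p : pred T) s : all p s <-> (forall x, List.In x s -> p x).
Proof.
elim: s => //= y s IH; split=> [/andP[hy /IH hs] x [<-|hx] //|h]; first exact: hs.
by apply/andP; split; [apply: h; left|apply/IH => x hx; apply: h; right].
Qed.

Lemma sumn_flat_map X Y (w : Y -> nat) (f : X -> seq Y) (s : seq X) :
  sumn (map w (List.flat_map f s)) = sumn (map (fun x => sumn (map w (f x))) s).
Proof. by elim: s => //= x s IH; rewrite map_cat sumn_cat IH. Qed.

Lemma leq_sumn X (f g : X -> nat) (s : seq X) :
  (forall x, List.In x s -> f x <= g x)%N -> (sumn (map f s) <= sumn (map g s))%N.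
Proof.
elim: s => //= x s IH h; apply: leq_add; first by apply: h; left.
by apply: IH => y hy; apply: h; right.
Qed.

Lemma sumn_const X (s : seq X) (k : nat) : sumn (map (fun=> k) s) = (size s * k)%N.
Proof. by elim: s => //= x s ->; rewrite mulSn. Qed.

Lemma sumn_scale X (k : nat) (f : X -> nat) (s : seq X) :
  sumn (map (fun x => k * f x) s) = (k * sumn (map f s))%N.
Proof. by elim: s => [|x s /= ->]; rewrite ?muln0 ?mulnDr. Qed.

Lemma sumn_sqr_le X (g : X -> nat) (s : seq X) :
  (sumn (map (fun x => g x ^ 2) s) <= sumn (map g s) ^ 2)%N.
Proof. elim: s => //= x s IH; nia. Qed.

Lemma in_flat_map_union X Y (P : X -> Prop) (s : seq X) (f : X -> seq Y) (l : seq Y) :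
  (forall x, P x <-> List.In x s) ->
  forall y, ((exists x, P x /\ List.In y (f x)) \/ List.In y l) <->
            List.In y (l ++ List.flat_map f s).
Proof.
move=> hs y; rewrite List.in_app_iff List.in_flat_map; split.
  by case=> [[x [/hs hx hy]]|hy]; [right; exists x|left].
by case=> [hy|[x [/hs hx hy]]]; [right|left; exists x].
Qed.

Lemma fin_weight_seq X (A : X -> Prop) (w : X -> nat) (l : seq X) :
  (forall x, A x <-> List.In x l) -> exists n, fin_weight A w n /\ (n <= sumn (map w l))%N.
Proof.
move=> hA; suff [l' [hnd [hl' hw]]] : exists l', List.NoDup l' /\
    (forall x, List.In x l' <-> List.In x l) /\ (sumn (map w l') <= sumn (map w l))%N.
  exists (sumn (map w l')); split=> //; exists l'; split=> //; split=> // x.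
  by split=> [/hA/hl'|/hl'/hA].
elim: l {hA} => [|x l [l' [hnd [hl' hw]]]]; first by exists [::]; split; [constructor|].
case: (classic (List.In x l')) => hx.
  exists l'; split=> //; split=> [y|/=]; last lia.
  by split=> [/hl' hy|[<-|/hl']] //; right.
exists (x :: l'); split; first by constructor.
split=> [y|/=]; last lia.
by split=> /= -[->|/hl' hy]; auto.
Qed.

Lemma fin_card_seq X (A : X -> Prop) (l : seq X) :
  (forall x, A x <-> List.In x l) -> exists n, fin_card A n /\ (n <= size l)%N.
Proof.
move=> /(fin_weight_seq (fun=> 1%N)) [n [[l' [hnd [hl' hw]]] hn]].
exists n; rewrite sumn_const muln1 in hn; split=> //.
by exists l'; rewrite -hw sumn_const muln1.
Qed.

Fixpoint term_nested_ind (P : term -> Prop) (hv : forall n, P (Var n))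
  (hf : forall f ts, (forall t, List.In t ts -> P t) -> P (Fn f ts)) (t : term) {struct t} : P t :=
 match t with
 | Var n => hv n
 | Fn f ts => hf f ts ((fix go (ts : seq term) : forall t, List.In t ts -> P t :=
     match ts with
     | [::] => fun t (h : List.In t [::]) => False_ind _ h
     | t0 :: ts0 => fun t h => match h with
                   | or_introl e => eq_ind t0 P (@term_nested_ind P hv hf t0) t e
                   | or_intror h' => go ts0 t h' end
     end) ts)
 end.

Fixpoint tvars (t : term) : seq nat :=
  match t with
  | Var x => [:: x]
  | Fn _ ts => (fix go (ts : seq term) : seq nat :=
      match ts with [::] => [::] | t :: ts => tvars t ++ go ts end) ts
  end.

Lemma tvarsE f ts : tvars (Fn f ts) = flatten (map tvars ts).
Proof. by elim: ts => //= t ts ->. Qed.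

Lemma tevalE D (F : sym -> seq D -> D) e f ts :
  teval F e (Fn f ts) = F f (map (teval F e) ts).
Proof. by rewrite /=; congr (F f); elim: ts => //= t ts ->. Qed.

Lemma tsizeE f ts : Defs.tsize (Fn f ts) = (1 + sumn (map Defs.tsize ts))%N.
Proof. by rewrite /=; congr (1 + _)%N; elim: ts => //= t ts ->. Qed.

Lemma wf_termE Lf f ts : wf_term Lf (Fn f ts) <->
  Lf f /\ size ts = arity f /\ (forall t, List.In t ts -> wf_term Lf t).
Proof.
rewrite /=; split=> -[hf [hs hts]]; do 2 (split=> //).
  by elim: ts hts {hs} => //= t ts IH [ht hts] u [<-|hu] //; exact: IH.
elim: ts hts {hs} => //= t ts IH hts; split; first by apply: hts; left.
by apply: IH => u hu; apply: hts; right.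
Qed.

Lemma tvars_size t : (size (tvars t) <= Defs.tsize t)%N.
Proof.
elim/term_nested_ind: t => [n|f ts IH] //.
rewrite tvarsE tsizeE size_flatten /shape -map_comp.
elim: ts IH => //= t ts IHts IH.
have := IH t (or_introl erefl); have := IHts (fun u hu => IH u (or_intror hu)).
rewrite /=; lia.
Qed.

Lemma eq_teval_env D (F : sym -> seq D -> D) (e1 e2 : nat -> D) t :
  {in tvars t, e1 =1 e2} -> teval F e1 t = teval F e2 t.
Proof.
elim/term_nested_ind: t => [n|f ts IH] h; first by apply: h; rewrite /= inE.
rewrite !tevalE tvarsE in h *; congr (F f).
elim: ts IH h => //= t ts IHts IH h; congr cons.
  by apply: IH; [left|move=> y hy; apply: h; rewrite mem_cat hy].
apply: IHts => [u hu|y hy]; first by apply: IH; right.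
by apply: h; rewrite mem_cat hy orbT.
Qed.

Lemma eq_map_teval_env D (F : sym -> seq D -> D) (e1 e2 : nat -> D) ts :
  {in flatten (map tvars ts), e1 =1 e2} -> map (teval F e1) ts = map (teval F e2) ts.
Proof.
elim: ts => //= t ts IH h; congr cons.
  by apply: eq_teval_env => y hy; apply: h; rewrite mem_cat hy.
by apply: IH => y hy; apply: h; rewrite mem_cat hy orbT.
Qed.

Lemma eq_teval_fun D (F1 F2 : sym -> seq D -> D) (Lf : sym -> Prop) e t :
  (forall f, Lf f -> F1 f = F2 f) -> wf_term Lf t -> teval F1 e t = teval F2 e t.
Proof.
move=> hF; elim/term_nested_ind: t => [n|f ts IH] //= /wf_termE [hf [_ hts]].
rewrite -!/(teval _ _ (Fn f ts)) !tevalE hF //; congr (F2 f).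
elim: ts IH hts {hf} => //= t ts IHts IH hts; congr cons.
  by apply: IH; [left|apply: hts; left].
by apply: IHts => [u hu|u hu]; [apply: IH; right|apply: hts; right].
Qed.

(** * Formulae: variables, subformulae and truth values *)

(* All variable occurrences, bound ones included. *)
Fixpoint vars R (f : formula R) : seq nat :=
  match f with
  | Atom _ ts => flatten (map tvars ts)
  | Cst _ => [::]
  | Neg a | Dlt a => vars a
  | Conj a b | Disj a b | Imp a b | Iff a b | Eqc a b | Prec a b => vars a ++ vars b
  | All x a | Ex x a => x :: vars a
  end.

Definition children R (chi : formula R) : seq (formula R) :=
  match chi with
  | Atom _ _ | Cst _ => [::]
  | Neg a | Dlt a | All _ a | Ex _ a => [:: a]
  | Conj a b | Disj a b | Imp a b | Iff a b | Eqc a b | Prec a b => [:: a; b]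
  end.

Fixpoint subforms R (f : formula R) : seq (formula R) :=
  f :: match f with
  | Atom _ _ | Cst _ => [::]
  | Neg a | Dlt a | All _ a | Ex _ a => subforms a
  | Conj a b | Disj a b | Imp a b | Iff a b | Eqc a b | Prec a b => subforms a ++ subforms b
  end.

Definition closure R (phi : formula R) : formula R :=
  foldr (fun x f => All x f) phi (vars phi).

Section Syntax.
Variable R : Type.
Implicit Types f chi psi : formula R.

Lemma children_ind (P : formula R -> Prop) :
  (forall chi, (forall a, List.In a (children chi) -> P a) -> P chi) -> forall chi, P chi.
Proof.
move=> H; elim=> [p ts|c|a IH|a IH|a IHa b IHb|a IHa b IHb|a IHa b IHb|a IHa b IHb
  |a IHa b IHb|a IHa b IHb|x a IH|x a IH]; apply: H => /= u;
 try (by case); try (by case=> [<-|[]]); by case=> [<-|[<-|[]]].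
Qed.

Lemma subforms_self chi : List.In chi (subforms chi).
Proof. by case: chi => *; left. Qed.

Lemma subforms_children chi a c :
  List.In a (children chi) -> List.In c (subforms a) -> List.In c (subforms chi).
Proof.
case: chi => [p ts|c'|a'|a'|a' b|a' b|a' b|a' b|a' b|a' b|x a'|x a'] /=;
 try (by case); try (by case=> [<-|[]] h; right);
 by case=> [<-|[<-|[]]] h; right; apply: List.in_or_app; [left|right].
Qed.

Lemma subforms_inherited (P : formula R -> Prop) :
  (forall chi a, List.In a (children chi) -> P chi -> P a) ->
  forall psi chi, P psi -> List.In chi (subforms psi) -> P chi.
Proof.
move=> H; elim=> [p ts|c|a IH|a IH|a IHa b IHb|a IHa b IHb|a IHa b IHb|a IHa b IHb
  |a IHa b IHb|a IHa b IHb|x a IH|x a IH] chi hP /= [<-|h] //; try by case: h.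
all: try (by apply: IH => //; apply: H hP; left).
all: by case: (List.in_app_or _ _ _ h) => h';
  [apply: IHa h'; apply: H hP; left|apply: IHb h'; apply: H hP; right; left].
Qed.

Lemma subforms_trans psi a chi :
  List.In a (subforms psi) -> List.In chi (subforms a) -> List.In chi (subforms psi).
Proof.
move=> ha; apply: (@subforms_inherited (fun a => forall c, List.In c (subforms a) ->
  List.In c (subforms psi)) _ psi a) => // b c hc hb d hd.
exact/hb/(subforms_children hc).
Qed.

Lemma subforms_vars psi chi :
  List.In chi (subforms psi) -> {subset vars chi <= vars psi}.
Proof.
apply: (@subforms_inherited (fun chi => {subset vars chi <= vars psi})) => //.
move=> c a hc h y hy; apply: h; move: hc hy.
case: c => [p ts|c|a'|a'|a' b|a' b|a' b|a' b|a' b|a' b|x a'|x a'] //=;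
  by move=> hc hy; repeat case: hc => [->|hc]; rewrite ?inE ?mem_cat hy ?orbT.
Qed.

Lemma subforms_tcons psi chi :
  List.In chi (subforms psi) -> forall x, List.In x (tcons chi) -> List.In x (tcons psi).
Proof.
apply: (@subforms_inherited (fun chi => forall x, List.In x (tcons chi) ->
  List.In x (tcons psi))) => //.
move=> c a hc h x hx; apply: h; move: hc hx.
case: c => [p ts|c|a'|a'|a' b|a' b|a' b|a' b|a' b|a' b|y a'|y a'] //=;
  by move=> hc hx; repeat case: hc => [->|hc]; try apply: List.in_or_app; auto.
Qed.

Lemma subforms_fsize psi chi : List.In chi (subforms psi) -> (fsize chi <= fsize psi)%N.
Proof.
apply: (@subforms_inherited (fun chi => fsize chi <= fsize psi)%N) => //.
move=> c a hc; apply: leq_trans; move: hc.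
case: c => [p ts|c|a'|a'|a' b|a' b|a' b|a' b|a' b|a' b|x a'|x a'] //=;
  move=> hc; repeat case: hc => [->|hc]; lia.
Qed.

Lemma subforms_wf Lf Lp (CL : R -> Prop) psi chi :
  wf_form Lf Lp CL psi -> List.In chi (subforms psi) -> wf_form Lf Lp CL chi.
Proof.
apply: subforms_inherited => c a.
case: c => [p ts|c|a'|a'|a' b|a' b|a' b|a' b|a' b|a' b|x a'|x a'] //=;
  by move=> hc; repeat case: hc => [->|hc]; try case.
Qed.

Lemma size_subforms f : (size (subforms f) <= fsize f)%N.
Proof.
elim: f => [p ts|c|a IH|a IH|a IHa b IHb|a IHa b IHb|a IHa b IHb|a IHa b IHb
  |a IHa b IHb|a IHa b IHb|x a IH|x a IH] //=; rewrite ?size_cat; lia.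
Qed.

Lemma size_vars f : (size (vars f) <= fsize f)%N.
Proof.
elim: f => [p ts|c|a IH|a IH|a IHa b IHb|a IHa b IHb|a IHa b IHb|a IHa b IHb
  |a IHa b IHb|a IHa b IHb|x a IH|x a IH] //=; rewrite ?size_cat; try lia.
rewrite size_flatten /shape -map_comp; elim: ts => //= t ts IH.
have := tvars_size t; lia.
Qed.

Lemma fsize_gt0 f : (0 < fsize f)%N.
Proof. by case: f. Qed.

Lemma fsize_closure f : (fsize (closure f) <= 3 * fsize f)%N.
Proof.
suff -> : fsize (closure f) = (fsize f + 2 * size (vars f))%N by have := size_vars f; lia.
by rewrite /closure; elim: (vars f) => /= [|x xs ->]; lia.
Qed.

Lemma tcons_closure f : tcons (closure f) = tcons f.
Proof. by rewrite /closure; elim: (vars f). Qed.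

Lemma wf_form_mono Lf (Lp Lp' : sym -> Prop) (CL : R -> Prop) f :
  (forall p, Lp p -> Lp' p) -> wf_form Lf Lp CL f -> wf_form Lf Lp' CL f.
Proof.
move=> hp; elim: f => [p ts|c|a IH|a IH|a IHa b IHb|a IHa b IHb|a IHa b IHb|a IHa b IHb
  |a IHa b IHb|a IHa b IHb|x a IH|x a IH] /=; try by case; auto.
all: by auto.
Qed.

Lemma wf_foldr_All Lf Lp (CL : R -> Prop) f xs :
  wf_form Lf Lp CL f -> wf_form Lf Lp CL (foldr (fun x f => All x f) f xs).
Proof. by elim: xs. Qed.

End Syntax.

Section Semantics.
Variables (R : realType) (D : Type).
Implicit Types (I : interp R D) (f : formula R) (e : nat -> D).

Lemma eq_fval_env I f e1 e2 : {in vars f, e1 =1 e2} -> fval I e1 f = fval I e2 f.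
Proof.
elim: f e1 e2 => [p ts|c|a IH|a IH|a IHa b IHb|a IHa b IHb|a IHa b IHb|a IHa b IHb
  |a IHa b IHb|a IHa b IHb|x a IH|x a IH] e1 e2 h /=.
all: try done.
all: try by rewrite (eq_map_teval_env _ h).
all: try by rewrite (IH e1 e2).
all: try by rewrite (IHa e1 e2) ?(IHb e1 e2) // => y hy; apply: h; rewrite /= mem_cat hy ?orbT.
all: suff -> : (fun d => fval I (upd e1 x d) a) = (fun d => fval I (upd e2 x d) a) by [].
all: apply: funext => d; apply: IH => y hy; rewrite /upd.
all: by case: ifP => // _; apply: h; rewrite /= inE hy orbT.
Qed.

Lemma eq_fval_interp I1 I2 Lf Lp (CL : R -> Prop) f :
  (forall g, Lf g -> ifun I1 g = ifun I2 g) -> (forall p, Lp p -> ipred I1 p = ipred I2 p) ->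
  wf_form Lf Lp CL f -> forall e, fval I1 e f = fval I2 e f.
Proof.
move=> hF hP; elim: f => [p ts|c|a IH|a IH|a IHa b IHb|a IHa b IHb|a IHa b IHb|a IHa b IHb
  |a IHa b IHb|a IHa b IHb|x a IH|x a IH] /= hw e; try done.
- case: hw => hp [_ hts]; rewrite hP //; congr (ipred I2 p).
  by elim: hts => //= t us ht _ ->; rewrite (eq_teval_fun _ hF ht).
all: try by rewrite IH.
all: try by case: hw => ha hb; rewrite IHa ?IHb.
all: by do 2 f_equal; apply: funext => d; exact: IH.
Qed.

Lemma inf_range_in01 (g : D -> R) : inhabited D ->
  (forall d, 0 <= g d <= 1) -> 0 <= inf (range g) <= 1.
Proof.
case=> d0 hg; apply/andP; split.
  apply: lb_le_inf; first by exists (g d0), d0.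
  by move=> _ [d _ <-]; case/andP: (hg d).
apply: (@le_trans _ _ (g d0)); last by case/andP: (hg d0).
apply: ge_inf; last by exists d0.
by exists 0 => _ [d _ <-]; case/andP: (hg d).
Qed.

Lemma sup_range_in01 (g : D -> R) : inhabited D ->
  (forall d, 0 <= g d <= 1) -> 0 <= sup (range g) <= 1.
Proof.
case=> d0 hg; apply/andP; split.
  apply: (@le_trans _ _ (g d0)); first by case/andP: (hg d0).
  apply: ub_le_sup; last by exists d0.
  by exists 1 => _ [d _ <-]; case/andP: (hg d).
apply: ge_sup; first by exists (g d0), d0.
by move=> _ [d _ <-]; case/andP: (hg d).
Qed.

Lemma fval_in01 I Lf Lp (CL : R -> Prop) f :
  inhabited D -> (forall c, CL c -> 0 <= c <= 1) ->
  wf_form Lf Lp CL f -> forall e, 0 <= fval I e f <= 1.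
Proof.
move=> hD hC; elim: f => [p ts|c|a IH|a IH|a IHa b IHb|a IHa b IHb|a IHa b IHb|a IHa b IHb
  |a IHa b IHb|a IHa b IHb|x a IH|x a IH] /= hw e.
- exact: ipred01.
- exact: hC.
all: try by case: ifP; rewrite ?ler01 ?lexx.
all: try (case: hw => ha hb; have /andP[a0 a1] := IHa ha e; have /andP[b0 b1] := IHb hb e).
- by rewrite le_min ge_min a0 a1 b0.
- by rewrite le_max ge_max a0 a1 b1.
- by rewrite /impv; case: ifP; rewrite ?ler01 ?lexx ?b0 ?b1.
- by rewrite /impv; do 2 case: ifP; rewrite ?le_min ?ge_min ?ler01 ?lexx ?a0 ?a1 ?b0 ?b1.
- exact: (inf_range_in01 hD (fun d => IH hw (upd e x d))).
- exact: (sup_range_in01 hD (fun d => IH hw (upd e x d))).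
Qed.

Lemma fmodels_closure I f : inhabited D -> fmodels I f -> fmodels I (closure f).
Proof.
case=> d0 hf; rewrite /closure; elim: (vars f) => //= x xs IH e /=.
suff -> : range (fun d => fval I (upd e x d) (foldr (fun x f => All x f) f xs)) = [set 1]%classic.
  exact: inf1.
by apply/seteqP; split=> [_ [d _ <-]|_ ->]; [rewrite /= IH|exists d0].
Qed.

Lemma fval_foldr_All_le I Lf Lp (CL : R -> Prop) f xs e0 :
  inhabited D -> (forall c, CL c -> 0 <= c <= 1) -> wf_form Lf Lp CL f ->
  forall e, fval I e (foldr (fun x f => All x f) f xs) <=
            fval I (fun y => if y \in xs then e0 y else e y) f.
Proof.
move=> hD hC hw; elim: xs => [|x xs IH] e /=; first exact: lexx.
apply: (@le_trans _ _ (fval I (upd e x (e0 x)) (foldr (fun x f => All x f) f xs))).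
  apply: ge_inf; last by exists (e0 x).
  exists 0 => _ [d _ <-]; have /andP[] // := fval_in01 I hD hC (wf_foldr_All xs hw) (upd e x d).
apply: (le_trans (IH _)).
suff -> : (fun y => if y \in xs then e0 y else upd e x (e0 x) y) =
          (fun y => if y \in x :: xs then e0 y else e y) by [].
apply: funext => y.
by rewrite inE /upd; case: (y == x) /eqP => [->|_] //=; case: (x \in xs).
Qed.

Lemma closure_lt1 I Lf Lp (CL : R -> Prop) f :
  inhabited D -> (forall c, CL c -> 0 <= c <= 1) -> wf_form Lf Lp CL f ->
  ~ fmodels I f -> forall e, fval I e (closure f) < 1.
Proof.
move=> hD hC hw hn e; have [e0 he0] : exists e0, fval I e0 f <> 1.
  by apply: not_all_ex_not => h; apply: hn.
apply: (le_lt_trans (fval_foldr_All_le I (vars f) e0 hD hC hw e)).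
rewrite (@eq_fval_env _ _ _ e0); last by move=> y ->.
have /andP[_ h1] := fval_in01 I hD hC hw e0.
by rewrite lt_neqAle h1 andbT; apply/eqP.
Qed.

End Semantics.

(** * Naming subformulae by atoms *)

Section Naming.
Variables (R : realType) (nm : seq nat -> formula R -> sym).
Implicit Types (chi a b : formula R) (v : seq nat).

(* [nm v chi] is the fresh predicate symbol standing for [chi]; its arguments are
   the variables [v] of the formula being translated. *)
Fact name_atom_key : unit. Proof. by []. Qed.
Definition name_atom v chi : formula R :=
  locked_with name_atom_key (Atom (nm v chi) (map Var v)).
Lemma name_atomE v chi : name_atom v chi = Atom (nm v chi) (map Var v).
Proof. by rewrite /name_atom unlock. Qed.

Definition name_children v chi : formula R :=
  let P := name_atom v in
  match chi with
  | Atom _ _ | Cst _ => chi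
  | Neg a => Neg (P a) | Dlt a => Dlt (P a)
  | Conj a b => Conj (P a) (P b) | Disj a b => Disj (P a) (P b)
  | Imp a b => Imp (P a) (P b) | Iff a b => Iff (P a) (P b)
  | Eqc a b => Eqc (P a) (P b) | Prec a b => Prec (P a) (P b)
  | All x a => All x (P a) | Ex x a => Ex x (P a)
  end.

(* Order clauses expressing [name_atom v chi = name_children v chi]. *)
Definition def_clauses v chi : seq (clause R) :=
  let P := name_atom v chi in
  let c0 := @Cst R 0 in let c1 := @Cst R 1 in
  match chi with
  | Atom _ _ | Cst _ | All _ _ | Ex _ _ => [:: [:: Eqc P (name_children v chi)]]
  | Neg a => let A := name_atom v a in [:: [:: Prec c0 A; Eqc P c1]; [:: Eqc A c0; Eqc P c0]]
  | Dlt a => let A := name_atom v a in [:: [:: Prec A c1; Eqc P c1]; [:: Eqc A c1; Eqc P c0]]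
  | Conj a b => let A := name_atom v a in let B := name_atom v b in
      [:: [:: Prec B A; Eqc P A]; [:: Prec A B; Eqc A B; Eqc P B]]
  | Disj a b => let A := name_atom v a in let B := name_atom v b in
      [:: [:: Prec A B; Eqc P A]; [:: Prec B A; Eqc A B; Eqc P B]]
  | Imp a b => let A := name_atom v a in let B := name_atom v b in
      [:: [:: Prec B A; Eqc P c1]; [:: Prec A B; Eqc A B; Eqc P B]]
  | Iff a b => let A := name_atom v a in let B := name_atom v b in
      [:: [:: Prec A B; Prec B A; Eqc P c1]; [:: Prec B A; Eqc A B; Eqc P A];
          [:: Prec A B; Eqc A B; Eqc P B]]
  | Eqc a b => let A := name_atom v a in let B := name_atom v b in
      [:: [:: Prec A B; Prec B A; Eqc P c1]; [:: Eqc A B; Eqc P c0]]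
  | Prec a b => let A := name_atom v a in let B := name_atom v b in
      [:: [:: Prec B A; Eqc A B; Eqc P c1]; [:: Prec A B; Eqc P c0]]
  end.

Definition cval D (I : interp R D) e (C : clause R) : bool := has (fun l => fval I e l == 1) C.

Lemma csatP D (I : interp R D) e (C : clause R) : csat I e C <-> cval I e C.
Proof.
rewrite /csat /cval; elim: C => [|l C IH] /=; first by split=> // -[? []].
split.
  by case=> l' [[<-|hl] h]; [rewrite h eqxx | apply/orP; right; apply/IH; exists l'].
case/orP=> [/eqP h|/IH [l' [h1 h2]]]; first by exists l; split=> //; left.
by exists l'; split=> //; right.
Qed.

Lemma eq_if01 (b : bool) : ((if b then 1 else 0 : R) == 1) = b.
Proof. by case: b; rewrite ?eqxx // eq_sym oner_eq0. Qed.

Lemma neg_clausesE (a p : R) : 0 <= a ->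
  ((0 < a) || (p == 1)) && ((a == 0) || (p == 0)) = (p == if a == 0 then 1 else 0).
Proof.
move=> a0; have [->|ha] := eqVneq a 0; first by rewrite ?ltxx ?eqxx /= ?orbT ?andbT.
have -> : 0 < a by rewrite lt_neqAle eq_sym ha a0.
by rewrite /= ?orbF.
Qed.

Lemma dlt_clausesE (a p : R) : a <= 1 ->
  ((a < 1) || (p == 1)) && ((a == 1) || (p == 0)) = (p == if a == 1 then 1 else 0).
Proof.
move=> a1; have [->|ha] := eqVneq a 1; first by rewrite ?ltxx ?eqxx /= ?orbT ?andbT.
have -> : a < 1 by rewrite lt_neqAle ha a1.
by rewrite /= ?orbF.
Qed.

Lemma conj_clausesE (a b p : R) :
  ((b < a) || (p == a)) && [|| a < b, a == b | p == b] = (p == Num.min a b).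
Proof. by case: (ltgtP a b) => h /=; rewrite ?andbT ?orbT ?orbF. Qed.

Lemma disj_clausesE (a b p : R) :
  ((a < b) || (p == a)) && [|| b < a, a == b | p == b] = (p == Num.max a b).
Proof. by case: (ltgtP a b) => h /=; rewrite ?andbT ?orbT ?orbF. Qed.

Lemma imp_clausesE (a b p : R) :
  ((b < a) || (p == 1)) && [|| a < b, a == b | p == b] = (p == impv a b).
Proof. by rewrite /impv; case: (ltgtP a b) => h /=; rewrite ?andbT ?orbT ?orbF. Qed.

Lemma iff_clausesE (a b p : R) : a <= 1 -> b <= 1 ->
  [&& [|| a < b, b < a | p == 1], [|| b < a, a == b | p == a] & [|| a < b, a == b | p == b]]
  = (p == Num.min (impv a b) (impv b a)).
Proof.
move=> a1 b1; rewrite /impv.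
by case: (ltgtP a b) => h /=; rewrite ?andbT ?orbT ?orbF ?minxx ?(min_r a1) ?(min_l b1).
Qed.

Lemma eqc_clausesE (a b p : R) :
  ([|| a < b, b < a | p == 1]) && ((a == b) || (p == 0)) = (p == if a == b then 1 else 0).
Proof. by case: (ltgtP a b) => h /=; rewrite ?andbT ?orbT ?orbF. Qed.

Lemma prec_clausesE (a b p : R) :
  [|| b < a, a == b | p == 1] && ((a < b) || (p == 0)) = (p == if a < b then 1 else 0).
Proof. by case: (ltgtP a b) => h /=; rewrite ?andbT ?orbT ?orbF. Qed.

Lemma def_clausesE D (I : interp R D) v chi e :
  all (cval I e) (def_clauses v chi) =
  (fval I e (name_atom v chi) == fval I e (name_children v chi)).
Proof.
have hA a : 0 <= fval I e (name_atom v a) <= 1 by rewrite name_atomE; exact: ipred01.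
case: chi => [p ts|c|a|a|a b|a b|a b|a b|a b|a b|x a|x a];
  rewrite /= /cval /= ?eq_if01 ?andbT ?orbF //=.
- by apply: neg_clausesE; case/andP: (hA a).
- by apply: dlt_clausesE; case/andP: (hA a).
- exact: conj_clausesE.
- exact: disj_clausesE.
- exact: imp_clausesE.
- by apply: iff_clausesE; [case/andP: (hA a)|case/andP: (hA b)].
- exact: eqc_clausesE.
- exact: prec_clausesE.
Qed.

Definition is_atom chi : Prop := if chi is Atom _ _ then True else False.

Lemma fval_name_children D (I1 I2 : interp R D) v chi :
  (forall a, List.In a (children chi) -> forall e, fval I1 e (name_atom v a) = fval I2 e a) ->
  (is_atom chi -> forall e, fval I1 e chi = fval I2 e chi) ->
  forall e, fval I1 e (name_children v chi) = fval I2 e chi.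
Proof.
case: chi => [p ts|c|a|a|a b|a b|a b|a b|a b|a b|x a|x a] H Hat e; try by apply: Hat.
all: try done.
all: try by rewrite /= (H a (or_introl erefl)).
all: try by rewrite /= (H a (or_introl erefl)) (H b (or_intror (or_introl erefl))).
all: rewrite /=; suff -> : (fun d => fval I1 (upd e x d) (name_atom v a)) =
  (fun d => fval I2 (upd e x d) a) by [].
all: by apply: funext => d; apply: H; left.
Qed.

Lemma fval_name_atom D (I : interp R D) v chi :
  (forall c, List.In c (subforms chi) -> forall e, all (cval I e) (def_clauses v c)) ->
  forall e, fval I e (name_atom v chi) = fval I e chi.
Proof.
elim/children_ind: chi => chi IH H e.
have := H chi (subforms_self chi) e; rewrite def_clausesE => /eqP ->.
apply: fval_name_children => [a ha e'|//].
by apply: IH => // c hc; apply: H; exact: subforms_children ha hc.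
Qed.

Definition subform_clauses psi : seq (clause R) :=
  List.flat_map (def_clauses (vars psi)) (subforms psi).

Definition root_name psi : formula R := name_atom (vars psi) psi.

Definition theory_clauses psi : seq (clause R) :=
  [:: Eqc (root_name psi) (Cst 1)] :: subform_clauses psi.

Definition goal_clauses phi : seq (clause R) :=
  [:: Prec (root_name (closure phi)) (Cst 1)] :: subform_clauses (closure phi).

Definition order_theory (T : formula R -> Prop) phi (C : clause R) : Prop :=
  (exists psi, T psi /\ List.In C (theory_clauses psi)) \/ List.In C (goal_clauses phi).

Lemma fval_root_name D (I : interp R D) psi :
  (forall C, List.In C (subform_clauses psi) -> cmodels I C) ->
  forall e, fval I e (root_name psi) = fval I e psi.
Proof.
move=> hS; apply: fval_name_atom => c hc e; apply/all_In => C hC; apply/csatP/hS.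
by apply/List.in_flat_map; exists c.
Qed.

End Naming.

(** * The canonical expansion *)

Definition env D (d0 : D) (v : seq nat) (ds : seq D) (y : nat) : D := nth d0 ds (index y v).

Lemma env_map D (d0 : D) v (e : nat -> D) y : y \in v -> env d0 v (map e v) y = e y.
Proof. by move=> hy; rewrite /env (nth_map y) ?index_mem // nth_index. Qed.

Section Expansion.
Variables (R : realType) (L : language) (CL : R -> Prop) (nm : seq nat -> formula R -> sym).
Local Notation wfL := (wf_form (Lfun L) (Lpred L) CL).
Hypothesis CL01 : forall c, CL c -> 0 <= c <= 1.
Hypothesis nm_fresh : forall v chi, ~ Lpred L (nm v chi).
Hypothesis nm_inj : forall v1 c1 v2 c2, wfL c1 -> wfL c2 ->
  nm v1 c1 = nm v2 c2 -> v1 = v2 /\ c1 = c2.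

(* The (unique, by [nm_inj]) pair [(v, chi)] named by a symbol, if any. *)
Definition name_dec (s : sym) : option (seq nat * formula R) :=
  match pselect (exists vc : seq nat * formula R, s = nm vc.1 vc.2 /\ wfL vc.2) with
  | left h => Some (proj1_sig (cid h))
  | right _ => None
  end.

Lemma name_decP s vc : name_dec s = Some vc -> s = nm vc.1 vc.2 /\ wfL vc.2.
Proof. by rewrite /name_dec; case: pselect => // h [<-]; exact: (proj2_sig (cid h)). Qed.

Lemma name_dec_nm v chi : wfL chi -> name_dec (nm v chi) = Some (v, chi).
Proof.
move=> hw; case h: (name_dec (nm v chi)) => [[v' c']|].
  by have [h1 h2] := name_decP h; have [-> ->] := nm_inj hw h2 h1.
by move: h; rewrite /name_dec; case: pselect => // -[]; exists (v, chi).
Qed.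

Lemma name_dec_L p : Lpred L p -> name_dec p = None.
Proof.
move=> hp; case h: (name_dec p) => [vc|] //.
by have [hpv _] := name_decP h; move: hp; rewrite hpv => /nm_fresh.
Qed.

Definition name_ipred D (A : interp R D) (d0 : D) (s : sym) (ds : seq D) : R :=
  if name_dec s is Some vc then fval A (env d0 vc.1 ds) vc.2 else ipred A s ds.

Lemma name_ipred_in01 D (A : interp R D) (d0 : D) s ds : 0 <= name_ipred A d0 s ds <= 1.
Proof.
rewrite /name_ipred; case h: (name_dec s) => [vc|]; last exact: ipred01.
have [_ hw] := name_decP h; exact: (fval_in01 A (inhabits d0) CL01 hw).
Qed.

Definition name_expansion D (A : interp R D) (d0 : D) : interp R D :=
  @Interp R D (ifun A) (name_ipred A d0) (name_ipred_in01 A d0).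

Lemma expands_name_expansion D (A : interp R D) d0 : expands L A (name_expansion A d0).
Proof. by split=> // p hp; apply: funext => ds; rewrite /= /name_ipred name_dec_L. Qed.

Lemma fval_name_expansion D (A : interp R D) d0 v chi :
  wfL chi -> {subset vars chi <= v} ->
  forall e, fval (name_expansion A d0) e (name_atom nm v chi) = fval A e chi.
Proof.
move=> hw hv e; rewrite name_atomE /= /name_ipred name_dec_nm //= -map_comp.
by apply: eq_fval_env => y hy; exact: env_map (hv y hy).
Qed.

Lemma fval_name_expansion_L D (A : interp R D) d0 chi :
  wfL chi -> forall e, fval (name_expansion A d0) e chi = fval A e chi.
Proof. by have [hF hP] := expands_name_expansion A d0; exact: eq_fval_interp. Qed.

Lemma name_expansion_subform_clauses D (A : interp R D) d0 psi :
  wfL psi -> forall C, List.In C (subform_clauses nm psi) -> cmodels (name_expansion A d0) C.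
Proof.
move=> hw C /List.in_flat_map [chi [hchi hC]] e; apply/csatP.
have hsub a : List.In a (subforms psi) ->
    forall e, fval (name_expansion A d0) e (name_atom nm (vars psi) a) = fval A e a.
  move=> ha; apply: fval_name_expansion; first exact: subforms_wf hw ha.
  exact: subforms_vars ha.
suff /all_In hall : all (cval (name_expansion A d0) e) (def_clauses nm (vars psi) chi).
  exact: hall.
rewrite def_clausesE (hsub chi hchi); apply/eqP; symmetry.
apply: fval_name_children => [a ha e'|_ e']; last first.
  exact/fval_name_expansion_L/(subforms_wf hw hchi).
by apply: hsub; apply: subforms_trans hchi (subforms_children ha (subforms_self a)).
Qed.

Section OrderTheory.
Variables (T : formula R -> Prop) (phi : formula R).
Hypothesis wf_phi : wfL phi.
Hypothesis wf_T : forall psi, T psi -> wfL psi.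

Lemma order_theory_expansion D (A : interp R D) d0 :
  tmodels A T -> ~ fmodels A phi -> smodels (name_expansion A d0) (order_theory nm T phi).
Proof.
move=> hT hphi C [[psi [Tpsi [<-|hC]]]|[<-|hC]].
- move=> e; apply/csatP; rewrite /cval /= orbF eq_if01.
  by rewrite (fval_name_expansion _ _ (wf_T Tpsi)) ?(hT psi Tpsi e).
- exact: name_expansion_subform_clauses (wf_T Tpsi) _ hC.
- move=> e; apply/csatP; rewrite /cval /= orbF eq_if01 fval_name_expansion //.
    exact: (closure_lt1 (inhabits d0) CL01 wf_phi hphi).
  exact: wf_foldr_All.
- exact: name_expansion_subform_clauses (wf_foldr_All _ wf_phi) _ hC.
Qed.

Lemma order_theory_reflect D (A A' : interp R D) : inhabited D ->
  expands L A A' -> smodels A' (order_theory nm T phi) -> tmodels A T /\ ~ fmodels A phi.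
Proof.
case=> d0 [hF hP] hS.
have hA f : wfL f -> forall e, fval A' e f = fval A e f by exact: eq_fval_interp.
have hroot psi : (forall C, List.In C (subform_clauses nm psi) -> order_theory nm T phi C) ->
    forall e, fval A' e (root_name nm psi) = fval A' e psi.
  by move=> hsub; apply: fval_root_name => C /hsub /hS.
split=> [psi Tpsi e|hphi].
  have hpsi := hroot psi (fun C hC => or_introl (ex_intro _ psi (conj Tpsi (or_intror hC)))).
  have := hS _ (or_introl (ex_intro _ psi (conj Tpsi (or_introl erefl)))) e.
  by move/csatP; rewrite /cval /= orbF eq_if01 hpsi (hA _ (wf_T Tpsi)) => /eqP.
have hcl := hroot (closure phi) (fun C hC => or_intror (or_intror hC)).
have := hS _ (or_intror (or_introl erefl)) (fun _ => d0).
move/csatP; rewrite /cval /= orbF eq_if01 hcl.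
have hphi' : fmodels A' phi by move=> e; rewrite hA.
by rewrite (fmodels_closure (inhabits d0) hphi') ltxx.
Qed.

Lemma order_theory_expansionP D : inhabited D -> forall A : interp R D,
  (tmodels A T /\ ~ fmodels A phi) <->
  exists A' : interp R D, expands L A A' /\ smodels A' (order_theory nm T phi).
Proof.
move=> hD A; split=> [[hT hphi]|[A' [hA' hS]]]; last exact: order_theory_reflect hA' hS.
case: hD => d0; exists (name_expansion A d0); split; first exact: expands_name_expansion.
exact: order_theory_expansion.
Qed.

End OrderTheory.

End Expansion.

Lemma entails_iff_not_satisfiable (R : realType) (L : language) T (phi : formula R) S :
  (forall D, inhabited D -> forall A : interp R D,
     (tmodels A T /\ ~ fmodels A phi) <-> exists A', expands L A A' /\ smodels A' S) ->
  entails T phi <-> ~ satisfiable S.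
Proof.
move=> hS; split=> [hent [D [hD [A' hA']]]|hns D hD A hT].
  have [hT hphi] := proj2 (hS D hD A') (ex_intro _ A' (conj (conj (fun _ _ => erefl) (fun _ _ => erefl)) hA')).
  exact: hphi (hent D hD A' hT).
apply: NNPP => hphi; apply: hns; have [A' [_ hA']] := proj1 (hS D hD A) (conj hT hphi).
by exists D; split=> //; exists A'.
Qed.

Section ClauseShape.
Variables (R : realType) (nm : seq nat -> formula R -> sym).
Hypothesis nm_arity : forall v chi, (nm v chi).2 = size v.

Lemma order_expr_name_atom v chi : order_expr (name_atom nm v chi).
Proof. by rewrite name_atomE. Qed.

Lemma wf_name_atom Lf (Lp : sym -> Prop) (CL : R -> Prop) v chi :
  Lp (nm v chi) -> wf_form Lf Lp CL (name_atom nm v chi).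
Proof.
rewrite name_atomE /= /arity size_map nm_arity => hp; do 2 split=> //.
by elim: v {hp} => //= x v IH; constructor.
Qed.

Lemma qatom_cond_Var x v : x \in v -> qatom_cond x (map Var v).
Proof.
move=> hx; split; first by rewrite has_map; apply/hasP; exists x => //=; rewrite eqxx.
by rewrite all_map; apply/allP => y _ /=; rewrite orbN.
Qed.

Lemma order_expr_All_name_atom x v chi : x \in v -> order_expr (All x (name_atom nm v chi)).
Proof. by rewrite name_atomE; exact: qatom_cond_Var. Qed.

Lemma order_expr_Ex_name_atom x v chi : x \in v -> order_expr (Ex x (name_atom nm v chi)).
Proof. by rewrite name_atomE; exact: qatom_cond_Var. Qed.

Lemma def_clauses_order Lf (Lp : sym -> Prop) (CL : R -> Prop) v chi C l :
  CL 0 -> CL 1 -> (forall a, List.In a (chi :: children chi) -> Lp (nm v a)) ->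
  {subset vars chi <= v} -> wf_form Lf Lp CL chi ->
  List.In C (def_clauses nm v chi) -> List.In l C ->
  order_literal l /\ wf_form Lf Lp CL l.
Proof.
move=> c0 c1 hQ hv hw hC hl.
have hP a : List.In a (chi :: children chi) -> wf_form Lf Lp CL (name_atom nm v a).
  by move=> ha; apply/wf_name_atom/hQ.
case: chi hQ hv hw hP hC => [p ts|c|a|a|a b|a b|a b|a b|a b|a b|x a|x a] hQ hv hw hP /= hC;
 move: hl; repeat (case: hC => [<-|hC]); try (by case: hC); move=> hl;
 repeat (case: hl => [<-|hl]); try (by case: hl);
 rewrite /=; (repeat split);
 try exact: order_expr_name_atom; try assumption;
 try (by case: hw => h1 [h2 h3]; auto);
 try (by apply/order_expr_All_name_atom/hv; rewrite /= inE eqxx);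
 try (by apply/order_expr_Ex_name_atom/hv; rewrite /= inE eqxx);
 try (by apply: hP; left); try (by apply: hP; right; left);
 by apply: hP; right; right; left.
Qed.

Lemma def_clauses_tcons v chi C l x :
  List.In C (def_clauses nm v chi) -> List.In l C -> List.In x (tcons l) ->
  x = 0 \/ x = 1 \/ List.In x (tcons chi).
Proof.
move=> hC hl hx.
case: chi hC => [p ts|c|a|a|a b|a b|a b|a b|a b|a b|y a|y a] /= hC;
 move: hl hx; repeat (case: hC => [<-|hC]); try (by case: hC); move=> hl;
 repeat (case: hl => [<-|hl]); try (by case: hl);
 rewrite /= ?name_atomE /=; repeat (case=> [<-|]); auto.
Qed.

End ClauseShape.

(** * Size of the translation *)

Section ClauseSize.
Variables (R : realType) (nm : seq nat -> formula R -> sym).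

Lemma fsize_name_atom v chi : fsize (name_atom nm v chi) = (1 + size v)%N.
Proof. by rewrite name_atomE /=; congr (1 + _)%N; elim: v => //= x v ->. Qed.

Lemma def_clauses_size v chi :
  (sumn (map (@csize R) (def_clauses nm v chi)) <= 30 * (size v + 2) + fsize chi)%N.
Proof.
case: chi => [p ts|c|a|a|a b|a b|a b|a b|a b|a b|y a|y a];
  rewrite /csize /= ?fsize_name_atom; lia.
Qed.

(* Each of the at most [|psi|] subformulae contributes [O(|psi|)]. *)
Lemma subform_clauses_size psi :
  (sumn (map (@csize R) (subform_clauses nm psi)) <= 99 * fsize psi ^ 2)%N.
Proof.
rewrite /subform_clauses sumn_flat_map.
have hv := size_vars psi; have hsub := size_subforms psi; have hpos := fsize_gt0 psi.
apply: (@leq_trans (sumn (map (fun=> 30 * (fsize psi + 2) + fsize psi) (subforms psi))))%N.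
  apply: leq_sumn => chi hchi; apply: (leq_trans (def_clauses_size _ _)).
  have := subforms_fsize hchi; lia.
rewrite sumn_const; nia.
Qed.

Lemma theory_clauses_size psi :
  (sumn (map (@csize R) (theory_clauses nm psi)) <= 103 * fsize psi ^ 2)%N.
Proof.
rewrite /= /csize /= -/(csize _) fsize_name_atom.
have := subform_clauses_size psi; have := size_vars psi; have := fsize_gt0 psi.
rewrite /csize; nia.
Qed.

Lemma goal_clauses_size phi :
  (sumn (map (@csize R) (goal_clauses nm phi)) <= 900 * fsize phi ^ 2)%N.
Proof.
rewrite /= /csize /= -/(csize _) fsize_name_atom.
have := subform_clauses_size (closure phi); have := size_vars (closure phi).
have := fsize_closure phi; have := fsize_gt0 phi.
rewrite /csize; nia.
Qed.

End ClauseSize.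

(** * Fresh and injective naming *)

Section FreshSupply.
Variables (P : nat -> nat -> Prop) (supply : forall n k, exists m, (k <= m)%N /\ P m n).

Definition fresh_above n k : nat := proj1_sig (cid (supply n k)).

Lemma fresh_aboveP n k : (k <= fresh_above n k)%N /\ P (fresh_above n k) n.
Proof. exact: proj2_sig (cid (supply n k)). Qed.

Fixpoint fresh_seq n k : nat :=
  if k is k'.+1 then fresh_above n (fresh_seq n k').+1 else fresh_above n 0.

Lemma fresh_seqP n k : P (fresh_seq n k) n.
Proof. by case: k => [|k]; apply: (fresh_aboveP _ _).2. Qed.

Lemma fresh_seq_inj n : injective (fresh_seq n).
Proof.
apply/incn_inj/leq_mono; apply: (@homo_ltn _ _ (fun a b => a < b)%N); first exact: ltn_trans.
by move=> k; exact: (fresh_aboveP n _).1.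
Qed.

End FreshSupply.

Fixpoint term_code (t : term) : GenTree.tree nat :=
  match t with
  | Var n => GenTree.Node 0 [:: GenTree.Leaf n]
  | Fn f ts => GenTree.Node 1 (GenTree.Leaf f.1 :: GenTree.Leaf f.2 :: map term_code ts)
  end.

Lemma term_code_inj : injective term_code.
Proof.
move=> t; elim/term_nested_ind: t => [n|[f1 f2] ts IH] [m|[g1 g2] us] //=; first by case=> ->.
case=> -> -> hts; congr (Fn _ _).
elim: ts us IH hts => [|t ts IHts] [|u us] //= IH [htu hts].
by rewrite (IH t (or_introl erefl) u htu) (IHts us (fun t ht => IH t (or_intror ht)) hts).
Qed.

(* [cf] is injective on [CL] only, so codes are injective on well-formed formulae. *)
Fixpoint form_code R (cf : R -> nat) (f : formula R) : GenTree.tree nat :=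
  match f with
  | Atom p ts => GenTree.Node 0 [:: GenTree.Leaf p.1; GenTree.Leaf p.2;
                                  GenTree.Node 0 (map term_code ts)]
  | Cst c => GenTree.Node 1 [:: GenTree.Leaf (cf c)]
  | Neg a => GenTree.Node 2 [:: form_code cf a]
  | Dlt a => GenTree.Node 3 [:: form_code cf a]
  | Conj a b => GenTree.Node 4 [:: form_code cf a; form_code cf b]
  | Disj a b => GenTree.Node 5 [:: form_code cf a; form_code cf b]
  | Imp a b => GenTree.Node 6 [:: form_code cf a; form_code cf b]
  | Iff a b => GenTree.Node 7 [:: form_code cf a; form_code cf b]
  | Eqc a b => GenTree.Node 8 [:: form_code cf a; form_code cf b]
  | Prec a b => GenTree.Node 9 [:: form_code cf a; form_code cf b]
  | All x a => GenTree.Node 10 [:: GenTree.Leaf x; form_code cf a]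
  | Ex x a => GenTree.Node 11 [:: GenTree.Leaf x; form_code cf a]
  end.

Lemma form_code_inj R (cf : R -> nat) Lf Lp (CL : R -> Prop) :
  (forall x y, CL x -> CL y -> cf x = cf y -> x = y) ->
  forall f g, wf_form Lf Lp CL f -> wf_form Lf Lp CL g -> form_code cf f = form_code cf g -> f = g.
Proof.
move=> hcf; elim=> [[p1 p2] ts|c|a IH|a IH|a IHa b IHb|a IHa b IHb|a IHa b IHb|a IHa b IHb
  |a IHa b IHb|a IHa b IHb|x a IH|x a IH]
  [[q1 q2] us|d|a'|a'|a' b'|a' b'|a' b'|a' b'|a' b'|a' b'|y a'|y a'] //= hf hg.
- by case=> -> -> /(inj_map term_code_inj) ->.
- by case=> /(hcf _ _ hf hg) ->.
all: try by case=> /(IH _ hf hg) ->.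
all: try by case: hf hg => hf1 hf2 [hg1 hg2] [/(IHa _ hf1 hg1) -> /(IHb _ hf2 hg2) ->].
all: by case=> -> /(IH _ hf hg) ->.
Qed.

Lemma exists_naming (R : realType) (L : language) (CL : R -> Prop) :
  countable_set CL -> (forall n k, exists m, (k <= m)%N /\ ~ Lpred L (m, n)) ->
  exists nm : seq nat -> formula R -> sym,
    [/\ forall v chi, (nm v chi).2 = size v,
        forall v chi, ~ Lpred L (nm v chi) &
        forall v1 c1 v2 c2, wf_form (Lfun L) (Lpred L) CL c1 ->
          wf_form (Lfun L) (Lpred L) CL c2 -> nm v1 c1 = nm v2 c2 -> v1 = v2 /\ c1 = c2].
Proof.
move=> [cf hcf] supply.
exists (fun v chi => (fresh_seq supply (size v) (pickle (v, form_code cf chi)), size v)).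
split=> // [v chi|v1 c1 v2 c2 hw1 hw2 [+ hs]]; first exact: (fresh_seqP supply).
rewrite hs => /fresh_seq_inj/(pcan_inj pickleK_inv) [-> hcode]; split=> //.
exact: form_code_inj hcf _ _ hw1 hw2 hcode.
Qed.

Section Translation.
Variables (R : realType) (L : language) (CL : R -> Prop) (nm : seq nat -> formula R -> sym).
Local Notation wfL := (wf_form (Lfun L) (Lpred L) CL).
Hypotheses (CL0 : CL 0) (CL1 : CL 1).
Hypothesis nm_arity : forall v chi, (nm v chi).2 = size v.
Variables (T : formula R -> Prop) (phi : formula R).
Hypothesis wf_phi : wfL phi.
Hypothesis wf_T : forall psi, T psi -> wfL psi.

Definition subform_names psi : seq sym := map (nm (vars psi)) (subforms psi).

Definition naming_syms (q : sym) : Prop :=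
  (exists psi, T psi /\ List.In q (subform_names psi)) \/
  List.In q (subform_names (closure phi)).

Lemma subform_clauses_shape psi C l : wfL psi ->
  (forall q, List.In q (subform_names psi) -> naming_syms q) ->
  List.In C (subform_clauses nm psi) -> List.In l C ->
  order_literal l /\ wf_form (Lfun L) (fun p => Lpred L p \/ naming_syms p) CL l.
Proof.
move=> hw hQ /List.in_flat_map [chi [hchi hC]] hl.
apply: (def_clauses_order nm_arity CL0 CL1 _ _ _ hC hl).
- move=> a ha; right; apply/hQ/List.in_map.
  case: ha => [<-|ha] //; apply: subforms_trans hchi _.
  exact: subforms_children ha (subforms_self a).
- exact: subforms_vars hchi.
- by apply: wf_form_mono (subforms_wf hw hchi) => p; left.
Qed.

Lemma wf_root_name psi : T psi \/ psi = closure phi ->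
  wf_form (Lfun L) (fun p => Lpred L p \/ naming_syms p) CL (root_name nm psi).
Proof.
move=> hpsi; apply: (wf_name_atom nm_arity); right; case: hpsi => [Tpsi|->].
  by left; exists psi; split=> //; apply/List.in_map/subforms_self.
by right; apply/List.in_map/subforms_self.
Qed.

Lemma order_theory_shape C : order_theory nm T phi C ->
  is_order_clause C /\
  forall l, List.In l C -> wf_form (Lfun L) (fun p => Lpred L p \/ naming_syms p) CL l.
Proof.
move=> hS; suff H l : List.In l C -> order_literal l /\
    wf_form (Lfun L) (fun p => Lpred L p \/ naming_syms p) CL l.
  by split=> l /H [].
case: hS => [[psi [Tpsi [<-|hC]]]|[<-|hC]] hl.
- case: hl => [<-|[]]; do 2 split=> //; first exact: order_expr_name_atom.
  by apply: wf_root_name; left.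
- apply: subform_clauses_shape hC hl; first exact: wf_T.
  by move=> q hq; left; exists psi.
- case: hl => [<-|[]]; do 2 split=> //; first exact: order_expr_name_atom.
  by apply: wf_root_name; right.
- apply: subform_clauses_shape hC hl; first exact: wf_foldr_All.
  by move=> q hq; right.
Qed.

Lemma order_theory_tcons C l x : order_theory nm T phi C -> List.In l C ->
  List.In x (tcons l) -> x <> 0 -> x <> 1 ->
  List.In x (tcons phi) \/ exists psi, T psi /\ List.In x (tcons psi).
Proof.
have hsub psi : List.In C (subform_clauses nm psi) -> List.In l C -> List.In x (tcons l) ->
    x <> 0 -> x <> 1 -> List.In x (tcons psi).
  move=> /List.in_flat_map [chi [hchi hC]] hl hx hx0 hx1.
  have [//|[//|hx']] := def_clauses_tcons hC hl hx.
  exact: subforms_tcons hchi _ hx'.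
case=> [[psi [Tpsi [<-|hC]]]|[<-|hC]] hl hx hx0 hx1.
- case: hl hx => [<-|[]]; rewrite /= /root_name name_atomE /= => -[hx|[]].
  by case: hx1.
- by right; exists psi; split=> //; exact: hsub hC hl hx hx0 hx1.
- case: hl hx => [<-|[]]; rewrite /= /root_name name_atomE /= => -[hx|[]].
  by case: hx1.
- by left; rewrite -tcons_closure; exact: hsub hC hl hx hx0 hx1.
Qed.

Lemma order_theory_finite nT : fin_weight T (@fsize R) nT ->
  exists nQ nS, [/\ fin_card naming_syms nQ, (nQ <= nT + 3 * fsize phi)%N,
                    fin_weight (order_theory nm T phi) (@csize R) nS &
                    (nS <= 103 * nT ^ 2 + 900 * fsize phi ^ 2)%N].
Proof.
move=> [s [_ [hs <-]]].
have [nQ [hQ hnQ]] := fin_card_seq (A := naming_syms)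
  (in_flat_map_union subform_names (subform_names (closure phi)) hs).
have [nS [hS hnS]] := fin_weight_seq (A := order_theory nm T phi) (@csize R)
  (in_flat_map_union (theory_clauses nm) (goal_clauses nm phi) hs).
exists nQ, nS; split=> //.
  apply: (leq_trans hnQ); rewrite -(muln1 (size _)) -sumn_const map_cat sumn_cat.
  rewrite sumn_flat_map sumn_const muln1 size_map.
  rewrite addnC; apply: leq_add.
    by apply: leq_sumn => psi _; rewrite sumn_const muln1 size_map size_subforms.
  exact: leq_trans (size_subforms _) (fsize_closure _).
apply: (leq_trans hnS); rewrite map_cat sumn_cat sumn_flat_map addnC.
apply: leq_add; last exact: goal_clauses_size.
apply: (@leq_trans (sumn (map (fun psi => 103 * fsize psi ^ 2)%N s))).
  by apply: leq_sumn => psi _; exact: theory_clauses_size.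
by rewrite (sumn_scale 103 (fun psi : formula R => fsize psi ^ 2)%N) leq_mul2l sumn_sqr_le orbT.
Qed.

End Translation.
Theorem theorem1 :
  exists c : nat,
  forall (L : language) (CL : Rdefinitions.R -> Prop)
         (T : formula Rdefinitions.R -> Prop) (phi : formula Rdefinitions.R),
    CL 0 -> CL 1 -> (forall x, CL x -> 0 <= x <= 1) -> countable_set CL ->
    (* infinite supply of fresh predicate symbols of every arity *)
    (forall n k : nat, exists m : nat, (k <= m)%N /\ ~ Lpred L (m, n)) ->
    wf_form (Lfun L) (Lpred L) CL phi ->
    (forall psi, T psi -> wf_form (Lfun L) (Lpred L) CL psi) ->
    exists (Q : sym -> Prop) (S : clause Rdefinitions.R -> Prop),
      (forall q, Q q -> ~ Lpred L q) /\
      (forall C, S C -> is_order_clause C /\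
         forall l, List.In l C ->
           wf_form (Lfun L) (fun p => Lpred L p \/ Q p) CL l) /\
      (* (i) *)
      (forall (D : Type), inhabited D -> forall A : interp Rdefinitions.R D,
         (tmodels A T /\ ~ fmodels A phi) <->
         exists A' : interp Rdefinitions.R D, expands L A A' /\ smodels A' S) /\
      (* (ii) *)
      (entails T phi <-> ~ satisfiable S) /\
      (* (iii) *)
      (forall nT : nat, fin_weight T (@fsize _) nT ->
         exists nQ nS : nat,
           fin_card Q nQ /\ (nQ <= c * (nT + fsize phi))%N /\
           fin_weight S (@csize _) nS /\ (nS <= c * (nT ^ 2 + fsize phi ^ 2))%N) /\
      (* (iv) *)
      (forall C l x, S C -> List.In l C -> List.In x (tcons l) -> x <> 0 -> x <> 1 ->
         List.In x (tcons phi) \/ exists psi, T psi /\ List.In x (tcons psi)).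
Proof.
exists 900%N => L CL T phi CL0 CL1 CL01 hcount supply wf_phi wf_T.
have [nm [nm_arity nm_fresh nm_inj]] := exists_naming hcount supply.
have hspec := order_theory_expansionP CL01 nm_fresh nm_inj wf_phi wf_T.
exists (naming_syms nm T phi), (order_theory nm T phi); split.
  by move=> q [[psi [_ /List.in_map_iff [chi [<- _]]]]|/List.in_map_iff [chi [<- _]]].
split; first exact: order_theory_shape.
split; first exact: hspec.
split; first exact: entails_iff_not_satisfiable hspec.
split; last exact: order_theory_tcons.
move=> nT /(order_theory_finite nm phi) [nQ [nS [hQ hnQ hS hnS]]].
(* [set] identifies the occurrences of [fsize phi] that differ only in how the
   carrier of the reals is written, which [lia] would otherwise keep apart. *)
exists nQ, nS; move: hnQ hnS; set f := fsize phi => hnQ hnS.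
by split=> //; split; [lia|split=> //; nia].
Qed.
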